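(* Let $n\ge 3$ and let $c=(c_1,\dots,c_n)\in\{-1,+1\}^n$ be such that the cyclic sequence $(c_1,\dots,c_n,-c_1,\dots,-c_n)$ of length $2n$ contains no $n-1$ cyclically consecutive equal entries. For real angles $\varphi_2,\dots,\varphi_n$ let $C(\varphi)$ be the real $2\times(n-1)$ matrix with columns indexed by $j=2,\dots,n$ and entries \[ C_{1j}=(c_j-c_{j-1})\sin\varphi_j,\qquad C_{2j}=(c_{j-1}-c_j)\cos\varphi_j . \] If $0<\varphi_2<\varphi_3<\dots<\varphi_n<\pi$, then $C(\varphi)$ has rank two.
   Context: $C(\varphi)$ is the Jacobian with respect to $(\varphi_2,\dots,\varphi_n)$ of the constraint functions $g_1(\varphi)=\sum_{j=2}^n (c_{j-1}-c_j)\cos\varphi_j-(c_1+c_n)$ and $g_2(\varphi)=\sum_{j=2}^n (c_{j-1}-c_j)\sin\varphi_j$. The hypothesis on $c$ expresses that $c$ is a code of a polygon (at most $n-2$ cyclically consecutive equal signs in the extended sequence of length $2n$). *)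

From HB Require Import structures.
From mathcomp Require Import all_boot all_order all_algebra.
From mathcomp Require Import all_classical all_reals all_analysis.
Set Implicit Arguments. Unset Strict Implicit. Unset Printing Implicit Defensive.
Import Order.TTheory GRing.Theory Num.Theory.
Local Open Scope ring_scope.

(* Paper indexing is kept: c i for 1 <= i <= n, phi j for 2 <= j <= n. *)

(* Extended cyclic sequence (c_1,...,c_n,-c_1,...,-c_n), indexed by k = 0..2n-1. *)
Definition ext_code (R : ringType) (n : nat) (c : nat -> R) (k : nat) : R :=
  if (k < n)%N then c k.+1 else - c (k - n).+1.

Definition no_long_run (R : ringType) (n : nat) (c : nat -> R) : Prop :=
  forall i : nat, (i < 2 * n)%N ->
    ~ (forall t : nat, (t < n - 1)%N ->
         ext_code n c ((i + t) %% (2 * n)) = ext_code n c i).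

Definition Cmat (R : realType) (n : nat) (c phi : nat -> R) : 'M[R]_(2, n.-1) :=
  \matrix_(i < 2, k < n.-1)
    (let j := (k + 2)%N in
     if i == 0 :> nat then (c j - c j.-1) * sin (phi j)
     else (c j.-1 - c j) * cos (phi j)).

From HB Require Import structures.
From mathcomp Require Import all_boot all_order all_algebra.
From mathcomp Require Import all_classical all_reals all_analysis.
From mathcomp Require Import zify ring lra.
Import Order.TTheory GRing.Theory Num.Theory.
Local Open Scope ring_scope.

(* The 2 x 2 minor of C(phi) on the columns of indices j < k equals
   (c_j - c_{j-1}) (c_k - c_{k-1}) sin (phi_k - phi_j), and 0 < phi_k - phi_j < pi,
   so it is nonzero as soon as the code changes sign at both j and k.  Two such
   sign changes exist: if the only one were at s (or there were none, s = 1), then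
   c_s, ..., c_n, -c_1, ..., -c_(s-1) would be n cyclically consecutive equal
   entries of the extended sequence. *)

Lemma det_mx22 (R : comPzRingType) (A : 'M[R]_2) :
  \det A = A 0 0 * A 1 1 - A 0 1 * A 1 0.
Proof.
rewrite (expand_det_row _ 0) !big_ord_recl big_ord0 /cofactor !det_mx11 !mxE /=.
have l1 : lift 0 0 = 1 :> 'I_2 by apply: val_inj.
have l0 : lift 1 0 = 0 :> 'I_2 by apply: val_inj.
by rewrite !expr0 !mul1r /bump /= expr1 l1 l0 mulN1r addr0 mulrN.
Qed.

Lemma mxrank_colsub_unit (F : fieldType) (m p : nat) (A : 'M[F]_(m, p))
    (f : 'I_m -> 'I_p) :
  colsub f A \in unitmx -> \rank A = m.
Proof.
move=> Af_unit; apply/eqP; rewrite eqn_leq rank_leq_row /=.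
rewrite -{1}(mxrank_unit Af_unit) -[X in colsub f X]mulmx1 -mulmx_colsub.
exact: mxrankM_maxl.
Qed.

Lemma det_Cmat_colsub (R : realType) (n : nat) (c phi : nat -> R) (u v : 'I_n.-1) :
  \det (colsub (fun l : 'I_2 => if l == 0 then u else v) (Cmat n c phi)) =
  (c (u + 2)%N - c (u + 2).-1) * (c (v + 2)%N - c (v + 2).-1)
  * sin (phi (v + 2)%N - phi (u + 2)%N).
Proof. by rewrite det_mx22 !mxE /= sinB; ring. Qed.

Lemma increasing_gap_bounds {R : realDomainType} {n : nat} {x : nat -> R} {b : R} :
  0 < x 2%N -> (forall j, (2 <= j)%N -> (j < n)%N -> x j < x j.+1) -> x n < b ->
  forall j k, (2 <= j)%N -> (j < k)%N -> (k <= n)%N -> 0 < x k - x j < b.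
Proof.
move=> x2_gt0 x_step xn_lt j k le2j ltjk lekn.
pose D := [pred i : nat | 2 <= i <= n]%N.
have D_interval : {in D &, forall i l m, i < m < l -> m \in D}%N.
  by move=> i l Di Dl m; rewrite !inE in Di Dl *; lia.
have D_step : {in D, forall i, i.+1 \in D -> x i < x i.+1}.
  by move=> i; rewrite !inE => /andP[le2i _] /andP[_ ltin]; exact: x_step.
have x_lt := homo_ltn_in lt_trans D_interval D_step.
have x_le := homo_leq_in lexx le_trans D_interval (fun i Di Di1 => ltW (D_step i Di Di1)).
have x2j : x 2%N <= x j by apply: x_le; rewrite ?inE //; lia.
have xkn : x k <= x n by apply: x_le; rewrite ?inE //; lia.
have xjk : x j < x k by apply: x_lt; rewrite ?inE //; lia.
apply/andP; split; lra.
Qed.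

Lemma run_const (T : Type) (c : nat -> T) (a b : nat) :
  (forall i, (a < i <= b)%N -> c i = c i.-1) ->
  forall i, (a <= i <= b)%N -> c i = c a.
Proof.
move=> c_step; elim=> [|i IH] hi; first by have -> : a = 0%N by lia.
have [-> //|neq] := eqVneq a i.+1.
by rewrite c_step /=; [apply: IH|]; lia.
Qed.

Lemma sign_neq_opp (R : ringType) (x y : R) :
  x = 1 \/ x = -1 -> y = 1 \/ y = -1 -> x != y -> x = - y.
Proof. by case=> ->; case=> ->; rewrite ?opprK ?eqxx. Qed.

Lemma flipped_block_long_run (R : ringType) (n s : nat) (c : nat -> R) :
  (1 <= s <= n)%N ->
  (forall i, (s <= i <= n)%N -> c i = c s) ->
  (forall i, (1 <= i < s)%N -> c i = - c s) ->
  ~ no_long_run n c.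
Proof.
move=> hs c_tail c_head no_run; apply: (no_run s.-1) => [|t ltt]; first by lia.
have -> : ((s.-1 + t) %% (2 * n) = s.-1 + t)%N by apply: modn_small; lia.
rewrite /ext_code (_ : s.-1 < n)%N; last by lia.
have -> : s.-1.+1 = s by lia.
case: ifP => lt_n; first by apply: c_tail; lia.
by rewrite c_head ?opprK //; lia.
Qed.

Lemma two_sign_changes {R : ringType} {n : nat} {c : nat -> R} :
  (0 < n)%N ->
  (forall i, (1 <= i <= n)%N -> c i = 1 \/ c i = -1) ->
  no_long_run n c ->
  exists j k, [/\ (2 <= j)%N, (j < k)%N, (k <= n)%N, c j != c j.-1 & c k != c k.-1].
Proof.
move=> n_gt0 c_sign no_run.
have [//|no_two] := pselect (exists j k,
  [/\ (2 <= j)%N, (j < k)%N, (k <= n)%N, c j != c j.-1 & c k != c k.-1]).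
exfalso.
have [[j0 hj0 c_j0]|no_change] :=
  pselect (exists2 j, (2 <= j <= n)%N & c j != c j.-1); last first.
  apply: (@flipped_block_long_run _ n 1 c _ _ _ no_run) => [|i hi|i]; try lia.
  apply: run_const hi => l hl; apply/eqP/negPn/negP => c_l.
  by apply: no_change; exists l => //; lia.
have c_step i : (2 <= i <= n)%N -> i != j0 -> c i = c i.-1.
  move=> hi neq; apply/eqP/negPn/negP => c_i; apply: no_two.
  by case: (ltngtP i j0) neq => // [lt|gt] _;
    [exists i, j0 | exists j0, i]; split=> //; lia.
have c_head i : (1 <= i <= j0.-1)%N -> c i = c 1%N.
  by apply: run_const => l hl; apply: c_step; lia.
apply: (@flipped_block_long_run _ n j0 c _ _ _ no_run) => [|i hi|i hi]; first by lia.
  by apply: run_const hi => l hl; apply: c_step; lia.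
have -> : c i = c j0.-1 by rewrite !c_head //; lia.
by apply: sign_neq_opp; [apply: c_sign; lia | apply: c_sign; lia | rewrite eq_sym].
Qed.

Theorem lemma2 (R : realType) (n : nat) (c phi : nat -> R) :
  (3 <= n)%N ->
  (forall i : nat, (1 <= i <= n)%N -> c i = 1 \/ c i = -1) ->
  no_long_run n c ->
  0 < phi 2%N ->
  (forall j : nat, (2 <= j)%N -> (j < n)%N -> phi j < phi j.+1) ->
  phi n < pi ->
  \rank (Cmat n c phi) = 2%N.
Proof.
move=> n_ge3 c_sign no_run phi2_gt0 phi_step phin_lt_pi.
have [j [k [le2j ltjk lekn c_j c_k]]] :=
  two_sign_changes (ltnW (ltnW n_ge3)) c_sign no_run.
have [lt_u lt_v] : (j - 2 < n.-1)%N /\ (k - 2 < n.-1)%N by lia.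
pose u := Ordinal lt_u; pose v := Ordinal lt_v.
have [uE vE] : (u + 2 = j)%N /\ (v + 2 = k)%N by rewrite /= !subnK; lia.
apply: (@mxrank_colsub_unit _ _ _ _ (fun l : 'I_2 => if l == 0 then u else v)).
rewrite unitmxE unitfE det_Cmat_colsub uE vE.
rewrite !mulf_neq0 ?subr_eq0 // gt_eqF // sin_gt0_pi //.
exact: (increasing_gap_bounds phi2_gt0 phi_step phin_lt_pi _ _ le2j ltjk lekn).
Qed.
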